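(* For every command $C$, every $c \in \{\mathit{true},\mathit{false}\}$ and every $\omega$-chain $f_0 \le f_1 \le f_2 \le \cdots$ of expectations (ordered pointwise), \[ \mathsf{et}_c[C]\bigl(\sup_{n\in\mathbb{N}} f_n\bigr) = \sup_{n\in\mathbb{N}} \mathsf{et}_c[C](f_n), \] where suprema of expectations are taken pointwise.
   Context: Let $\mathrm{Var}$ be a finite set of integer-valued variables and $\Sigma = \mathrm{Var}\to\mathbb{Z}$ the set of stores. Boolean expressions $\varphi$ over $\mathrm{Var}$ are evaluated on stores; $\sigma\models\varphi$ means $\varphi$ holds in $\sigma$. A distribution expression $d$ assigns to each store $\sigma$ a probability distribution $d(\sigma)$ on $\mathbb{Z}$ (countable support, total mass $1$). Commands are given by the grammar $C,D ::= \mathtt{skip} \mid \mathtt{tick}(r) \mid \mathtt{halt} \mid x :\approx d \mid \mathtt{if}_{[\psi]}(\varphi)\{C\}\{D\} \mid \mathtt{while}_{[\psi]}(\varphi)\{C\} \mid C \,\square\, D \mid C \oplus_p D \mid C;D$, with $r$ a nonnegative rational, $x\in\mathrm{Var}$, $\varphi,\psi$ Boolean expressions ($\psi$ is an assertion), and $p\in[0,1]$. An expectation is a function $f:\Sigma\to[0,\infty]$; $\mathrm{Expect}$ is the set of expectations, ordered pointwise ($f\le g$ iff $f(\sigma)\le g(\sigma)$ for all $\sigma$). Operations are lifted pointwise, $\mathbf{r}$ denotes the constant function $r$, $[\varphi](\sigma)=1$ if $\sigma\models\varphi$ and $0$ otherwise, and for a Boolean $c$, $[c]=1$ if $c=\mathit{true}$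 and $0$ otherwise; the convention $0\cdot\infty=0$ is used. For $c\in\{\mathit{true},\mathit{false}\}$ the transformer $\mathsf{et}_c[\cdot]:\mathrm{Cmd}\to\mathrm{Expect}\to\mathrm{Expect}$ is defined by: $\mathsf{et}_c[\mathtt{skip}](f)=f$; $\mathsf{et}_c[\mathtt{tick}(r)](f)=[c]\cdot\mathbf{r}+f$; $\mathsf{et}_c[\mathtt{halt}](f)=\mathbf{0}$; $\mathsf{et}_c[x:\approx d](f)=\lambda\sigma.\sum_{i\in\mathbb{Z}} d(\sigma)(i)\cdot f(\sigma[x\mapsto i])$; $\mathsf{et}_c[\mathtt{if}_{[\psi]}(\varphi)\{C\}\{D\}](f)=[\psi\wedge\varphi]\cdot\mathsf{et}_c[C](f)+[\psi\wedge\neg\varphi]\cdot\mathsf{et}_c[D](f)$; $\mathsf{et}_c[\mathtt{while}_{[\psi]}(\varphi)\{C\}](f)=\mathrm{lfp}\,F.\ [\psi\wedge\varphi]\cdot\mathsf{et}_c[C](F)+[\psi\wedge\neg\varphi]\cdot f$ (least fixed point w.r.t. the pointwise order); $\mathsf{et}_c[C\,\square\,D](f)=\max(\mathsf{et}_c[C](f),\mathsf{et}_c[D](f))$; $\mathsf{et}_c[C\oplus_p D](f)=\mathbf{p}\cdot\mathsf{et}_c[C](f)+\mathbf{(1-p)}\cdot\mathsf{et}_c[D](f)$; $\mathsf{et}_c[C;D](f)=\mathsf{et}_c[C](\mathsf{et}_c[D](f))$. *)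

From HB Require Import structures.
From mathcomp Require Import all_boot all_order all_algebra.
From mathcomp Require Import all_classical all_reals.
From mathcomp Require Import ereal esum.
Set Implicit Arguments. Unset Strict Implicit. Unset Printing Implicit Defensive.
Import Order.TTheory GRing.Theory Num.Theory.
Local Open Scope ring_scope.
Local Open Scope classical_set_scope.

Section Defs.
Variables (R : realType) (Var : finType).

Definition store := Var -> int.
Definition upd (s : store) (x : Var) (i : int) : store :=
  fun y => if y == x then i else s y.

Definition bexp := store -> bool.

(* probability distributions on Z (countable support is automatic on Z) *)
Record distr := Distr {
  dmass :> int -> R;
  dmass_ge0 : forall i, 0 <= dmass i;
  dmass_sum1 : (\esum_(i in setT) (dmass i)%:E = 1)%E }.

Definition dexp := store -> distr.

Inductive cmd :=
| Skip
| Tick (r : rat) (hr : 0 <= r)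
| Halt
| Assign (x : Var) (d : dexp)
| Ite (psi phi : bexp) (C D : cmd)
| While (psi phi : bexp) (C : cmd)
| NDet (C D : cmd)
| PChoice (C : cmd) (p : R) (hp : 0 <= p <= 1) (D : cmd)
| Seq (C D : cmd).

(* expectations: functions store -> [0, +oo] (nonnegativity imposed where needed) *)
Definition expect := store -> \bar R.

Definition iverson (b : bool) : \bar R := (if b then 1 else 0)%E.

(* least fixed point w.r.t. the pointwise order on [0,oo]-valued expectations,
   via Knaster-Tarski: pointwise infimum of all nonnegative pre-fixed points *)
Definition lfp (Phi : expect -> expect) : expect :=
  fun s => ereal_inf [set g s | g in
    [set g : expect | (forall t, (0 <= g t)%E) /\ (forall t, (Phi g t <= g t)%E)]].

Fixpoint et (c : bool) (C : cmd) (f : expect) {struct C} : expect :=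
  match C with
  | Skip => f
  | Tick r _ => fun s => (iverson c * (ratr r)%:E + f s)%E
  | Halt => fun _ => 0%E
  | Assign x d => fun s => (\esum_(i in setT) ((d s i)%:E * f (upd s x i)))%E
  | Ite psi phi C1 D1 => fun s =>
      (iverson (psi s && phi s) * et c C1 f s
       + iverson (psi s && ~~ phi s) * et c D1 f s)%E
  | While psi phi C1 =>
      lfp (fun F s => (iverson (psi s && phi s) * et c C1 F s
                      + iverson (psi s && ~~ phi s) * f s)%E)
  | NDet C1 D1 => fun s => maxe (et c C1 f s) (et c D1 f s)
  | PChoice C1 p _ D1 => fun s =>
      (p%:E * et c C1 f s + (1 - p)%:E * et c D1 f s)%E
  | Seq C1 D1 => fun s => et c C1 (et c D1 f) s
  end.

Definition esup (f : nat -> expect) : expect :=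
  fun s => ereal_sup [set f n s | n in [set: nat]].

End Defs.

(* Tick, conditionals and probabilistic choice are nonnegative linear combinations,
   and suprema of nondecreasing sequences are limits, hence additive; nondeterministic
   choice is a binary max; an assignment is an [esum], a supremum of finite sums, so it
   commutes with the supremum of the chain.  For loops, the least fixed point of a
   monotone omega-continuous map is the supremum of its Kleene iterates; these iterates
   depend continuously on the post-expectation, and exchanging the two suprema gives
   continuity of the loop. *)

From HB Require Import structures.
From mathcomp Require Import all_boot all_order all_algebra.
From mathcomp Require Import all_classical all_reals.
From mathcomp Require Import ereal esum topology normedtype sequences.
Set Implicit Arguments. Unset Strict Implicit. Unset Printing Implicit Defensive.
Import Order.TTheory GRing.Theory Num.Theory.
Local Open Scope ring_scope.
Local Open Scope classical_set_scope.

Local Notation supn u := (ereal_sup (range u)).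

Section ge0_chain_sup.
Context {R : realType}.
Local Open Scope ereal_scope.
Implicit Types (u v : nat -> \bar R) (x : \bar R).

Definition ge0_chain u := (forall n, 0 <= u n) /\ (forall n, u n <= u n.+1).

Lemma supn_ub u n : u n <= supn u.
Proof. by apply: ereal_sup_ubound; exists n. Qed.

Lemma supn_le u x : (forall n, u n <= x) -> supn u <= x.
Proof. by move=> ux; apply: ge_ereal_sup => _ [n _ <-]. Qed.

Lemma supn_cst x : supn (fun _ : nat => x) = x.
Proof. by apply/le_anti; rewrite supn_le // (supn_ub (fun _ : nat => x) 0). Qed.

Lemma supn_ge0 u : (forall n, 0 <= u n) -> 0 <= supn u.
Proof. by move=> u0; apply: le_trans (u0 0%N) (supn_ub _ _). Qed.

Lemma ge0_chainZ (r : R) u : (0 <= r)%R -> ge0_chain u ->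
  ge0_chain (fun n => r%:E * u n).
Proof.
move=> r0 [u0 un]; split=> n; first by rewrite mule_ge0.
by rewrite lee_wpmul2l ?lee_fin.
Qed.

Lemma ge0_chainD u v : ge0_chain u -> ge0_chain v -> ge0_chain (fun n => u n + v n).
Proof. by move=> [u0 un] [v0 vn]; split=> n; [rewrite adde_ge0 | rewrite leeD]. Qed.

Lemma ge0_chain_sum (I : Type) (s : seq I) (a : nat -> I -> \bar R) :
  (forall i, ge0_chain (a ^~ i)) -> ge0_chain (fun n => \sum_(i <- s) a n i).
Proof.
move=> a_chain; split=> n.
  by rewrite sume_ge0 // => i _; case: (a_chain i).
by rewrite lee_sum // => i _; case: (a_chain i).
Qed.

(* The supremum of a nondecreasing sequence is its limit, and limits are additive. *)
Lemma supnD u v : ge0_chain u -> ge0_chain v ->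
  supn (fun n => u n + v n) = supn u + supn v.
Proof.
move=> uc vc.
have cvg_sup (w : nat -> \bar R) : (forall n, w n <= w n.+1) -> w @ \oo --> supn w.
  by move=> wn; apply: ereal_nondecreasing_cvgn; apply/nondecreasing_seqP.
have cvg_uv : (fun n => u n + v n) @ \oo --> supn u + supn v.
  apply: cvgeD; [|exact: cvg_sup uc.2|exact: cvg_sup vc.2].
  by apply: ge0_adde_def; rewrite inE !supn_ge0 //; [exact: uc.1 | exact: vc.1].
exact: cvg_unique _ (cvg_sup _ (ge0_chainD uc vc).2) cvg_uv.
Qed.

Lemma supnZ (r : R) u : (0 <= r)%R -> supn (fun n => r%:E * u n) = r%:E * supn u.
Proof.
move=> r0; rewrite -ereal_supZl //; last by apply/set0P; exists (u 0%N), 0%N.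
by rewrite image_comp.
Qed.

Lemma supn_lin (a b : R) u v : (0 <= a)%R -> (0 <= b)%R -> ge0_chain u -> ge0_chain v ->
  supn (fun n => a%:E * u n + b%:E * v n) = a%:E * supn u + b%:E * supn v.
Proof.
move=> a0 b0 uc vc.
by rewrite (supnD (ge0_chainZ a0 uc) (ge0_chainZ b0 vc)) !supnZ.
Qed.

Lemma supn_max u v : supn (fun n => maxe (u n) (v n)) = maxe (supn u) (supn v).
Proof.
apply/le_anti/andP; split.
  by apply: supn_le => n; rewrite ge_max !le_max !supn_ub orbT.
by rewrite ge_max; apply/andP; split; apply: supn_le => n;
  apply: le_trans (supn_ub _ n); rewrite le_max lexx ?orbT.
Qed.

Lemma supn_swap (u : nat -> nat -> \bar R) :
  supn (fun m => supn (u m)) = supn (fun n => supn (fun m => u m n)).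
Proof.
have le_swap (w : nat -> nat -> \bar R) :
    supn (fun m => supn (w m)) <= supn (fun n => supn (fun m => w m n)).
  apply: supn_le => m; apply: supn_le => n.
  exact: le_trans (supn_ub (fun m => w m n) m) (supn_ub _ n).
by apply/le_anti; rewrite le_swap (le_swap (fun n m => u m n)).
Qed.

Lemma supn_sum (I : Type) (s : seq I) (a : nat -> I -> \bar R) :
  (forall i, ge0_chain (a ^~ i)) ->
  supn (fun n => \sum_(i <- s) a n i) = \sum_(i <- s) supn (a ^~ i).
Proof.
move=> a_chain; elim: s => [|i s IH].
  by rewrite big_nil; under eq_fun do rewrite big_nil; exact: supn_cst.
rewrite big_cons -IH; under eq_fun do rewrite big_cons.
by rewrite supnD //; exact: ge0_chain_sum.
Qed.

(* Monotone convergence for [esum]: both sides are suprema over finite subsets and [n]. *)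
Lemma esum_supn (T : choiceType) (S : set T) (a : nat -> T -> \bar R) :
  (forall i, ge0_chain (a ^~ i)) ->
  \esum_(i in S) supn (a ^~ i) = supn (fun n => \esum_(i in S) a n i).
Proof.
move=> a_chain; have a0 n i : 0 <= a n i by case: (a_chain i).
apply/le_anti/andP; split; last first.
  by apply: supn_le => n; apply: le_esum => i _; exact: supn_ub.
apply: ge_ereal_sup => _ [X [finX XS] <-].
rewrite fsbig_finite // -supn_sum //; apply: supn_le => n.
apply: le_trans (supn_ub _ n); apply: esum_ge; exists X => //.
by rewrite fsbig_finite.
Qed.

End ge0_chain_sup.

Section expectation_transformers.
Variables (R : realType) (Var : finType).
Local Open Scope ereal_scope.
Local Notation expect := (expect R Var).
Implicit Types (g h : expect) (F : nat -> expect) (Phi : expect -> expect).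

(* [expect] also contains functions with negative values, so every property of a
   transformer is stated relative to nonnegative arguments. *)
Definition nneg_expect g := forall s, 0 <= g s.
Definition le_expect g h := forall s, g s <= h s.
Definition expect_chain F := forall s, ge0_chain (F ^~ s).

Definition preserves_nneg Phi := forall g, nneg_expect g -> nneg_expect (Phi g).
Definition monotone_nneg Phi :=
  forall g h, nneg_expect g -> le_expect g h -> le_expect (Phi g) (Phi h).
Definition chain_continuous Phi :=
  forall F, expect_chain F -> Phi (esup F) = esup (Phi \o F).

Lemma expect_chain_nneg F n : expect_chain F -> nneg_expect (F n).
Proof. by move=> Fc s; case: (Fc s). Qed.

Lemma expect_chain_le F n : expect_chain F -> le_expect (F n) (F n.+1).
Proof. by move=> Fc s; case: (Fc s). Qed.

Lemma expect_chain_cst g : nneg_expect g -> expect_chain (fun _ => g).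
Proof. by move=> g0 s; split. Qed.

Lemma esup_cst g : esup (fun _ : nat => g) = g.
Proof. by apply/funext => s; exact: supn_cst. Qed.

Lemma esup_nneg F : expect_chain F -> nneg_expect (esup F).
Proof. by move=> Fc s; apply: supn_ge0 => n; exact: expect_chain_nneg. Qed.

Lemma expect_chain_map Phi F : preserves_nneg Phi -> monotone_nneg Phi ->
  expect_chain F -> expect_chain (Phi \o F).
Proof.
move=> Phi0 Phim Fc s; split=> n /=.
  exact: Phi0 (expect_chain_nneg n Fc) s.
exact: Phim (expect_chain_nneg n Fc) (expect_chain_le n Fc) s.
Qed.

Lemma lfp_nneg Phi : nneg_expect (lfp Phi).
Proof. by move=> s; apply: le_ereal_inf_tmp => _ [g [g0 _] <-]. Qed.

Lemma le_lfp Phi Phi' : (forall g, nneg_expect g -> le_expect (Phi g) (Phi' g)) ->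
  le_expect (lfp Phi) (lfp Phi').
Proof.
move=> PhiPhi' s; apply: le_ereal_inf_tmp => _ [g [g0 g_pre] <-].
apply: ereal_inf_lbound; exists g => //; split=> // t.
exact: le_trans (PhiPhi' g g0 t) (g_pre t).
Qed.

Definition kleene Phi n : expect := iter n Phi (fun _ => 0).

Lemma kleene_chain Phi : preserves_nneg Phi -> monotone_nneg Phi ->
  expect_chain (kleene Phi).
Proof.
move=> Phi0 Phim.
have K0 n : nneg_expect (kleene Phi n) by elim: n => [|n IH] s //=; exact: Phi0.
have Kn n : le_expect (kleene Phi n) (kleene Phi n.+1).
  elim: n => [|n IH] s /=; first exact: Phi0.
  exact: Phim (K0 n) IH s.
by move=> s; split=> n; [exact: K0 | exact: Kn].
Qed.

Lemma lfp_kleene Phi : preserves_nneg Phi -> monotone_nneg Phi -> chain_continuous Phi ->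
  lfp Phi = esup (kleene Phi).
Proof.
move=> Phi0 Phim Phic; have Kc := kleene_chain Phi0 Phim.
apply/funext => s; apply/le_anti/andP; split.
  apply: ereal_inf_lbound; exists (esup (kleene Phi)) => //; split.
    exact: esup_nneg.
  move=> t; rewrite Phic //; apply: supn_le => n.
  exact: (supn_ub (kleene Phi ^~ t) n.+1).
apply: le_ereal_inf_tmp => _ [g [g0 g_pre] <-]; apply: supn_le => n.
elim: n s => [|n IH] s //=.
apply: le_trans (g_pre s); apply: Phim => //; exact: expect_chain_nneg n Kc.
Qed.

Section lfp_continuity.
Variable Psi : expect -> expect -> expect.
Hypothesis Psi_nneg : forall g h, nneg_expect g -> nneg_expect h -> nneg_expect (Psi g h).
Hypothesis Psi_mono : forall g g' h h', nneg_expect g -> nneg_expect h ->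
  le_expect g g' -> le_expect h h' -> le_expect (Psi g h) (Psi g' h').
Hypothesis Psi_cont : forall F F', expect_chain F -> expect_chain F' ->
  Psi (esup F) (esup F') = esup (fun n => Psi (F n) (F' n)).

Lemma kleene_param_chain g : nneg_expect g -> expect_chain (kleene (Psi g)).
Proof.
by move=> g0; apply: kleene_chain => [h|h h'] *; [exact: Psi_nneg | exact: Psi_mono].
Qed.

Lemma lfp_kleene_param g : nneg_expect g -> lfp (Psi g) = esup (kleene (Psi g)).
Proof.
move=> g0; apply: lfp_kleene => [h|h h'|F Fc] *; [exact: Psi_nneg | exact: Psi_mono |].
by rewrite -{1}(esup_cst g) Psi_cont //; exact: expect_chain_cst.
Qed.

Lemma le_kleene_param g g' n : nneg_expect g -> le_expect g g' ->
  le_expect (kleene (Psi g) n) (kleene (Psi g') n).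
Proof.
move=> g0 gg'; elim: n => [|n IH] s //=.
by apply: Psi_mono => //; exact: expect_chain_nneg n (kleene_param_chain g0).
Qed.

Lemma kleene_param_esup F n : expect_chain F ->
  kleene (Psi (esup F)) n = esup (fun m => kleene (Psi (F m)) n).
Proof.
move=> Fc; elim: n => [|n IH]; first by rewrite esup_cst.
rewrite /= -/(kleene _ n) IH Psi_cont //.
move=> s; split=> m.
  exact: expect_chain_nneg n (kleene_param_chain (expect_chain_nneg m Fc)) s.
exact: le_kleene_param (expect_chain_nneg m Fc) (expect_chain_le m Fc) s.
Qed.

Lemma lfp_param_continuous : chain_continuous (fun g => lfp (Psi g)).
Proof.
move=> F Fc; rewrite /= lfp_kleene_param; last exact: esup_nneg.
have -> : kleene (Psi (esup F)) = fun n => esup (fun m => kleene (Psi (F m)) n).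
  by apply/funext => n; exact: kleene_param_esup.
have -> : (fun g => lfp (Psi g)) \o F = fun m => esup (kleene (Psi (F m))).
  by apply/funext => m; rewrite /= lfp_kleene_param //; exact: expect_chain_nneg.
apply/funext => s; exact: supn_swap.
Qed.

End lfp_continuity.

End expectation_transformers.

Section et_continuity.
Variables (R : realType) (Var : finType).
Local Open Scope ereal_scope.
Local Notation expect := (expect R Var).

Lemma iversonE b : iverson R b = (b%:R)%:E.
Proof. by case: b. Qed.

Lemma iverson_ge0 b : 0 <= iverson R b.
Proof. by rewrite iversonE lee_fin ler0n. Qed.

Section loop_body.
Variables (b1 b2 : store Var -> bool) (T : expect -> expect).
Hypotheses (T_nneg : preserves_nneg T) (T_mono : monotone_nneg T)
  (T_cont : chain_continuous T).

Definition loop_body (g h : expect) : expect :=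
  fun s => iverson R (b1 s) * T h s + iverson R (b2 s) * g s.

Lemma loop_body_nneg g h : nneg_expect g -> nneg_expect h -> nneg_expect (loop_body g h).
Proof.
by move=> g0 h0 s; rewrite adde_ge0 // mule_ge0 ?iverson_ge0 //; exact: T_nneg.
Qed.

Lemma loop_body_mono g g' h h' : nneg_expect g -> nneg_expect h ->
  le_expect g g' -> le_expect h h' -> le_expect (loop_body g h) (loop_body g' h').
Proof.
move=> g0 h0 gg' hh' s.
by rewrite leeD // lee_wpmul2l ?iverson_ge0 //; exact: T_mono.
Qed.

Lemma loop_body_cont F F' : expect_chain F -> expect_chain F' ->
  loop_body (esup F) (esup F') = esup (fun n => loop_body (F n) (F' n)).
Proof.
move=> Fc F'c; apply/funext => s; rewrite /loop_body T_cont // /esup /= !iversonE.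
by rewrite supn_lin ?ler0n //; exact: expect_chain_map.
Qed.

Lemma lfp_loop_body_continuous : chain_continuous (fun g => lfp (loop_body g)).
Proof. exact: lfp_param_continuous loop_body_nneg loop_body_mono loop_body_cont. Qed.

End loop_body.

Lemma et_nneg c (C : cmd R Var) : preserves_nneg (et c C).
Proof.
elim: C => /= [|r r0||x d|psi phi C IHC D IHD|psi phi C IHC|C IHC D IHD|C IHC p p01 D IHD
  |C IHC D IHD] g g0 s //.
- by rewrite adde_ge0 // mule_ge0 ?iverson_ge0 // lee_fin ler0q.
- by apply: esum_ge0 => i _; rewrite mule_ge0 // lee_fin dmass_ge0.
- by rewrite adde_ge0 // mule_ge0 ?iverson_ge0 //; [exact: IHC | exact: IHD].
- exact: lfp_nneg.
- by rewrite le_max IHC.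
- have /andP[p0 p1] := p01.
  by rewrite adde_ge0 // mule_ge0 ?lee_fin ?subr_ge0 //; [exact: IHC | exact: IHD].
- by apply: IHC; exact: IHD.
Qed.

Lemma et_mono c (C : cmd R Var) : monotone_nneg (et c C).
Proof.
elim: C => /= [|r r0||x d|psi phi C IHC D IHD|psi phi C IHC|C IHC D IHD|C IHC p p01 D IHD
  |C IHC D IHD] g h g0 gh s //.
- by rewrite leeD2l.
- by apply: le_esum => i _; rewrite lee_wpmul2l // lee_fin dmass_ge0.
- by rewrite leeD // lee_wpmul2l ?iverson_ge0 //; [exact: IHC | exact: IHD].
- apply: le_lfp => F F0.
  exact: (loop_body_mono (fun s => psi s && phi s) (fun s => psi s && ~~ phi s) IHC
    g0 F0 gh (fun t => lexx _)).
- by rewrite ge_max !le_max IHC // IHD // orbT.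
- have /andP[p0 p1] := p01.
  by rewrite leeD // lee_wpmul2l ?lee_fin ?subr_ge0 //; [exact: IHC | exact: IHD].
- by apply: IHC; [exact: et_nneg | exact: IHD].
Qed.

Lemma et_continuous c (C : cmd R Var) : chain_continuous (et c C).
Proof.
have et_chain (D : cmd R Var) F : expect_chain F -> expect_chain (et c D \o F).
  by apply: expect_chain_map; [exact: et_nneg | exact: et_mono].
elim: C => /= [|r r0||x d|psi phi C IHC D IHD|psi phi C IHC|C IHC D IHD|C IHC p p01 D IHD
  |C IHC D IHD] F Fc.
- by [].
- apply/funext => s; rewrite /esup /= supnD ?supn_cst //.
  by split=> n //; rewrite mule_ge0 ?iverson_ge0 // lee_fin ler0q.
- by rewrite esup_cst.
- apply/funext => s; rewrite /esup /= -esum_supn.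
    by apply: eq_esum => i _; rewrite supnZ // dmass_ge0.
  by move=> i; apply: ge0_chainZ; [exact: dmass_ge0 | exact: Fc].
- apply/funext => s; rewrite IHC // IHD // /esup /= !iversonE.
  by rewrite supn_lin ?ler0n //; exact: et_chain.
- exact: (lfp_loop_body_continuous (fun s => psi s && phi s) (fun s => psi s && ~~ phi s)
    (et_nneg c C) (et_mono c C) IHC Fc).
- by apply/funext => s; rewrite IHC // IHD // /esup /= supn_max.
- have /andP[p0 p1] := p01.
  apply/funext => s; rewrite IHC // IHD // /esup /=.
  by rewrite supn_lin ?subr_ge0 //; exact: et_chain.
- by rewrite IHD // IHC //; exact: et_chain.
Qed.

End et_continuity.

Theorem mainTheorem1 (R : realType) (Var : finType) (C : cmd R Var) (c : bool)
  (f : nat -> expect R Var)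
  (f_ge0 : forall n s, (0 <= f n s)%E)
  (f_chain : forall n s, (f n s <= f n.+1 s)%E) :
  et c C (esup f) = esup (fun n => et c C (f n)).
Proof. by apply: et_continuous => s; split=> n; [exact: f_ge0 | exact: f_chain]. Qed.
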